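(* Let $R$ be a localizable archimedean partially ordered commutative ring and let $q\in\mathrm{Loc}(R)$. Then $\mathrm{O}_{q<\infty}$ is dense in $\mathcal{K}(R)$.
   Context: Rings are commutative with unit; ring morphisms are unital. A partially ordered commutative ring is a commutative ring $R$ with partial order $\le$, $r\le s\Rightarrow r+t\le s+t$, positive cone $R^+$ closed under multiplication and containing all squares. $\mathbb{N}=\{1,2,\dots\}$, $\mathbb{N}_0=\mathbb{N}\cup\{0\}$. Archimedean: $kg+h\in R^+$ for all $k\in\mathbb{N}$ implies $g\in R^+$. $\mathrm{Loc}(R)$ is the set of $s\in1+R^+$ such that $rs\in R^+$ implies $r\in R^+$ for all $r$; localizable: every $r$ satisfies $-s\le r\le s$ for some $s\in\mathrm{Loc}(R)$. $R_{\mathrm{loc}}$: fractions $r/s$ ($r\in R$, $s\in\mathrm{Loc}(R)$), $r/s=r'/s'$ iff $rs'=r's$, ordered by $p/q\le r/s$ iff $ps\le rq$. $R^{\mathrm{bd}}_{\mathrm{loc}}=\{a:\exists n\in\mathbb{N}_0,\ -n\le a\le n\}$. $\mathcal{K}(R)$: ring morphisms $\varphi\colon R^{\mathrm{bd}}_{\mathrm{loc}}\to\mathbb{R}$ with $\varphi(a)\ge0$ for $a\ge0$, with the topology generated by the sets $\{\varphi:\varphi(a)\in V\}$, $a\in R^{\mathrm{bd}}_{\mathrm{loc}}$, $V\subseteq\mathbb{R}$ open. $\mathrm{O}_{q<\infty}=\{\varphi\in\mathcal{K}(R):\varphi(1/q)>0\}$. *)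

From HB Require Import structures.
From mathcomp Require Import all_boot all_order all_algebra.
From mathcomp Require Import all_classical all_reals topology normedtype.
Set Implicit Arguments. Unset Strict Implicit. Unset Printing Implicit Defensive.
Import Order.TTheory GRing.Theory Num.Theory.
Import numFieldNormedType.Exports.
Local Open Scope ring_scope.
Local Open Scope classical_set_scope.

Section POring.
Variable R : comPzRingType.
Variable le : R -> R -> Prop.

Record po_comring : Prop := {
  po_refl : forall x, le x x;
  po_antisym : forall x y, le x y -> le y x -> x = y;
  po_trans : forall x y z, le x y -> le y z -> le x z;
  po_add : forall r s t, le r s -> le (r + t) (s + t);
  po_mul : forall r s, le 0 r -> le 0 s -> le 0 (r * s);
  po_sq : forall r, le 0 (r * r) }.

Definition archimedean : Prop :=
  forall g h : R, (forall k : nat, (0 < k)%N -> le 0 (g *+ k + h)) -> le 0 g.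

Definition Loc (s : R) : Prop :=
  le 0 (s - 1) /\ forall r : R, le 0 (r * s) -> le 0 r.

Definition localizable : Prop :=
  forall r : R, exists s, Loc s /\ le (- s) r /\ le r s.

(* fractions r/s of R_loc, represented by pairs (r, s) with s in Loc(R) *)
Definition frac_eq (a b : R * R) : Prop := a.1 * b.2 = b.1 * a.2.
Definition frac_le (a b : R * R) : Prop := le (a.1 * b.2) (b.1 * a.2).
Definition frac_add (a b : R * R) : R * R := (a.1 * b.2 + b.1 * a.2, a.2 * b.2).
Definition frac_mul (a b : R * R) : R * R := (a.1 * b.1, a.2 * b.2).

Definition is_bd (a : R * R) : Prop :=
  Loc a.2 /\ exists n : nat, frac_le (- n%:R, 1) a /\ frac_le a (n%:R, 1).

Definition bdfrac := {a : R * R | is_bd a}.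

(* phi : R^bd_loc -> RR is a positive unital ring morphism (phi is given on
   representatives and required to be compatible with equality of fractions) *)
Definition character (RR : realType) (phi : bdfrac -> RR) : Prop :=
  [/\ (forall a b : bdfrac, frac_eq (sval a) (sval b) -> phi a = phi b),
      (forall a b c : bdfrac, frac_eq (sval c) (frac_add (sval a) (sval b)) ->
          phi c = phi a + phi b),
      (forall a b c : bdfrac, frac_eq (sval c) (frac_mul (sval a) (sval b)) ->
          phi c = phi a * phi b),
      (forall c : bdfrac, frac_eq (sval c) (1, 1) -> phi c = 1) &
      (forall a : bdfrac, frac_le (0, 1) (sval a) -> 0 <= phi a)].

Definition K (RR : realType) : set (bdfrac -> RR) := [set phi | character phi].

Definition O_q_lt_infty (RR : realType) (q : R) : set (bdfrac -> RR) :=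
  [set phi | K phi /\ exists a : bdfrac, frac_eq (sval a) (1, q) /\ 0 < phi a].

(* S is dense in K(R) for the topology generated by the subbasic sets
   {phi | phi(a) in V}: every nonempty basic open set (finite intersection of
   subbasic sets) meets S. *)
Definition dense_in_K (RR : realType) (S : set (bdfrac -> RR)) : Prop :=
  forall phi : bdfrac -> RR, K phi ->
  forall (n : nat) (a : 'I_n -> bdfrac) (V : 'I_n -> set RR),
    (forall i, open (V i)) -> (forall i, V i (phi (a i))) ->
    exists psi, S psi /\ forall i, V i (psi (a i)).

End POring.

From HB Require Import structures.
From mathcomp Require Import all_boot all_order all_algebra.
From mathcomp Require Import all_classical all_reals topology normedtype.
From mathcomp Require Import ring lra zify.
Set Implicit Arguments. Unset Strict Implicit. Unset Printing Implicit Defensive.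
Import Order.TTheory GRing.Theory Num.Theory.
Import numFieldNormedType.Exports.
Local Open Scope ring_scope.
Local Open Scope classical_set_scope.
Local Open Scope quotient_scope.

(* The positive cone T of the ring R^bd_loc of bounded fractions is an
   archimedean preprime in which every element lies below an integer.  For such
   a cone the Kadison-Dubois argument applies: if -x is not in T, a maximal
   proper preordering P containing T and k x - 1 is total, and
   a |-> sup {m / n | n a - m in P} is a positive ring morphism psi into the
   reals with psi x > 0.
   Given a character phi and a_1, ..., a_n, put m_i = floor (N phi(a_i)) and
   g = sum_i (N a_i - m_i)^2, so that phi(g) <= n.  Since q is in Loc(R),
   positivity of (g - n - 1)/q would force phi(g) >= n + 1; hence
   x = (n + 1 - g)/q is such that -x is not positive.  A character psi with
   psi(x) > 0 has psi(1/q) > 0 and psi(g) < n + 1, so that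
   |psi(a_i) - phi(a_i)| < (n + 2)/N for every i. *)

Lemma exists_rat_between (RR : realType) (x y : RR) : x < y ->
  exists (m : int) (n : nat), (0 < n)%N /\ x < m%:~R / n%:R < y.
Proof.
move=> xy; have d0 : 0 < y - x by rewrite subr_gt0.
set n := Num.bound ((y - x)^-1).
have hn : (y - x)^-1 < n%:R by apply: archi_boundP; rewrite ltW // invr_gt0.
have n0 : (0 : RR) < n%:R by apply: lt_trans hn; rewrite invr_gt0.
exists (Num.floor (x * n%:R) + 1), n; split; first by rewrite -(ltr_nat RR).
have h1 := floorD1_gt (x * n%:R); have h2 := floor_le (x * n%:R).
have : 1 < (y - x) * n%:R by rewrite -ltr_pdivrMl // mulr1.
by rewrite ltr_pdivlMr // ltr_pdivrMr // intrD; lra.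
Qed.

Lemma expn_Bernoulli (c N : nat) : (c ^ N * (c + N) <= c.+1 ^ N * c)%N.
Proof.
elim: N => [|N IH]; first by rewrite !expn0 !mul1n addn0.
by rewrite !expnS; move: IH; set a := (c ^ N)%N; set b := (c.+1 ^ N)%N; nia.
Qed.

Lemma exists_expn_ratio_le (j c : nat) : exists N : nat, (j * c ^ N <= c.+1 ^ N)%N.
Proof.
exists (j * c).+1; have := expn_Bernoulli c (j * c).+1.
by set a := (c ^ _)%N; set b := (c.+1 ^ _)%N; nia.
Qed.

Lemma open_ball_around (RR : realType) (V : set RR) x : open V -> V x ->
  exists e : RR, 0 < e /\ forall y, `|x - y| < e -> V y.
Proof.
move=> oV Vx; have /nbhs_ballP [e e0 he] : nbhs x V by apply: open_nbhs_nbhs.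
by exists e; split => // y hy; apply: he.
Qed.

Lemma exists_nat_scale (RR : realType) n (e : 'I_n -> RR) (c : RR) :
  (forall i, 0 < e i) -> 0 <= c -> exists N : nat, (0 < N)%N /\ forall i, c < e i * N%:R.
Proof.
move=> e0 c0; exists (\max_(i < n) Num.bound (c / e i)).+1; split => // i.
rewrite -ltr_pdivrMl // mulrC; apply: lt_le_trans (archi_boundP _) _.
  by rewrite divr_ge0 // ltW.
rewrite ler_nat ltnW // ltnS.
exact: (@leq_bigmax _ (fun i => Num.bound (c / e i)) i).
Qed.

Lemma dist_lt_of_sqr_lt (RR : realType) (s t : RR) (n : nat) :
  0 <= s < 1 -> t ^+ 2 < n.+1%:R -> `|s - t| < n.+2%:R.
Proof.
move=> /andP[s0 s1] ht; have n1 : (1 : RR) <= n.+1%:R by rewrite ler1n.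
rewrite -addn1 natrD ltr_norml; apply/andP; split; nra.
Qed.

Section Preprime.
Variables (A : comPzRingType) (T : set A).
Hypotheses (TD : forall a b, T a -> T b -> T (a + b))
  (TM : forall a b, T a -> T b -> T (a * b))
  (Tsq : forall a, T (a * a))
  (Tbd : forall a, exists n : nat, T (n%:R - a))
  (Tarch : forall g h, (forall k, (0 < k)%N -> T (g *+ k + h)) -> T g).

Lemma T0 : T 0. Proof. by have := Tsq 0; rewrite mulr0. Qed.
Lemma T1 : T 1. Proof. by have := Tsq 1; rewrite mulr1. Qed.

Lemma Tnat n : T n%:R.
Proof. by elim: n => [|n IH]; [exact: T0 | rewrite mulrS; exact: TD T1 IH]. Qed.

Lemma Tint (m : int) : 0 <= m -> T m%:~R.
Proof. by case: m => // n _; exact: Tnat. Qed.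

Lemma TMn a n : T a -> T (a *+ n).
Proof. by move=> Ta; rewrite -mulr_natr; exact: TM Ta (Tnat n). Qed.

Lemma TX a n : T a -> T (a ^+ n).
Proof.
by move=> Ta; elim: n => [|n IH]; [rewrite expr0; exact: T1 | rewrite exprS; exact: TM].
Qed.

Lemma Tsum I (r : seq I) (F : I -> A) : (forall i, T (F i)) -> T (\sum_(i <- r) F i).
Proof. by move=> TF; elim/big_ind: _ => //; exact: T0. Qed.

Lemma Tlbd a : exists n : nat, T (n%:R + a).
Proof. by have [n] := Tbd (- a); rewrite opprK; exists n. Qed.

Lemma T_divn a n : (0 < n)%N -> T (a *+ n) -> T a.
Proof.
move=> n0 Ta; have [M hM] := Tlbd a.
apply: (Tarch (h := M%:R *+ n)) => k _.
have hk : (k %% n <= n)%N by rewrite ltnW // ltn_mod.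
have -> : a *+ k + M%:R *+ n =
    (a *+ n) *+ (k %/ n) + ((M%:R + a) *+ (k %% n) + M%:R *+ (n - k %% n)).
  by rewrite {1}(divn_eq k n) mulrnDr mulrnBr //; ring.
by apply: TD; [exact: TMn | apply: TD; apply: TMn => //; exact: Tnat].
Qed.

Lemma T_subrXX a b N : T a -> T b ->
  exists2 Q, T Q & a ^+ N - b ^+ N = (a - b) * Q.
Proof.
move=> Ta Tb; rewrite subrXX; eexists; last by [].
by apply: Tsum => i; apply: TM; exact: TX.
Qed.

Lemma T_of_geometric_lbd z (c K : nat) :
  (forall N, T (c.+1%:R ^+ N * z + K%:R * c%:R ^+ N)) -> T z.
Proof.
move=> Tz; apply: (Tarch (h := 1)) => j _.
have [N hN] := exists_expn_ratio_le (j * K) c.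
apply: (@T_divn _ (c.+1 ^ N)); first by rewrite expn_gt0.
have -> : (z *+ j + 1) *+ (c.+1 ^ N) =
    (c.+1%:R ^+ N * z + K%:R * c%:R ^+ N) *+ j + (c.+1 ^ N - j * K * c ^ N)%N%:R.
  by rewrite natrB // -[LHS]mulr_natr !natrM !natrX; ring.
by apply: TD; [exact: TMn | exact: Tnat].
Qed.

(* Write 1 + p = c.+1 - y with 0 <= y <= c and z >= -K.  Then
   c.+1 ^ N z = z (1 + p) Q + z y ^ N >= -K c ^ N, as z (1 + p) = z^2 t. *)
Lemma T_of_mul_1D z t p : T p -> T t -> z * t = 1 + p -> T z.
Proof.
move=> Tp Tt hzt; have [c Ty] := Tbd p; set y := c%:R - p in Ty.
have [K TKz] := Tlbd z.
have Tzw : T (z * (1 + p)) by rewrite -hzt mulrA; exact: TM.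
apply: (@T_of_geometric_lbd _ c K) => N.
have [Q TQ eQ] := T_subrXX N (Tnat c.+1) Ty.
have [Q' TQ' eQ'] := T_subrXX N (Tnat c) Ty.
have -> : c.+1%:R ^+ N * z + K%:R * c%:R ^+ N =
    z * (1 + p) * Q + (K%:R + z) * y ^+ N + K%:R * (p * Q').
  have -> : p = c%:R - y by rewrite /y; ring.
  have -> : 1 + (c%:R - y) = c.+1%:R - y by rewrite mulrS; ring.
  by rewrite -mulrA -eQ -eQ'; ring.
apply: TD; [apply: TD|].
- exact: TM.
- by apply: TM => //; exact: TX.
- by apply: TM; [exact: Tnat | exact: TM].
Qed.

Definition preordering (P : set A) :=
  [/\ T `<=` P, (forall a b, P a -> P b -> P (a + b))
    & (forall a b, P a -> P b -> P (a * b))].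

Lemma preordering_T : preordering T. Proof. by split. Qed.

Definition proper_preordering (P : set A) := preordering P /\ ~ P (-1).

Definition maximal_preordering (P : set A) :=
  proper_preordering P /\ forall Q, proper_preordering Q -> P `<=` Q -> Q `<=` P.

Definition adjoin (P : set A) (b : A) :=
  [set y | exists p q, [/\ P p, P q & y = p + b * q]].

Lemma preordering_adjoin P b : preordering P -> preordering (adjoin P b).
Proof.
move=> [TP PD PM]; have Pbb : P (b * b) by apply: TP.
split.
- by move=> y Ty; exists y, 0; split => //; [exact: TP | apply: TP; exact: T0 | ring].
- move=> _ _ [p [q [Pp Pq ->]]] [p' [q' [Pp' Pq' ->]]].
  by exists (p + p'), (q + q'); split; [exact: PD | exact: PD | ring].
- move=> _ _ [p [q [Pp Pq ->]]] [p' [q' [Pp' Pq' ->]]].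
  exists (p * p' + (b * b) * (q * q')), (p * q' + p' * q); split; last by ring.
    by apply: PD; [exact: PM | apply: (PM) => //; exact: PM].
  by apply: PD; exact: PM.
Qed.

Lemma sub_adjoin P b : preordering P -> P `<=` adjoin P b.
Proof. by move=> [TP _ _] y Py; exists y, 0; split => //; [apply: TP; exact: T0 | ring]. Qed.

Lemma adjoin_self P b : preordering P -> adjoin P b b.
Proof.
by move=> [TP _ _]; exists 0, 1; split; [apply: TP; exact: T0 | apply: TP; exact: T1 | ring].
Qed.

Lemma proper_preordering_bigcup (F : set (set A)) : F !=set0 ->
  (forall X, F X -> proper_preordering X) -> total_on F subset ->
  proper_preordering (\bigcup_(X in F) X).
Proof.
move=> [X0 FX0] hF tot.
have closed (op : A -> A -> A) :
    (forall X, F X -> forall a b, X a -> X b -> X (op a b)) ->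
    forall a b, (\bigcup_(X in F) X) a -> (\bigcup_(X in F) X) b ->
    (\bigcup_(X in F) X) (op a b).
  move=> hop a b [X1 F1 a1] [X2 F2 b2].
  case: (tot _ _ F1 F2) => s; first by exists X2 => //; apply: hop => //; exact: s.
  by exists X1 => //; apply: hop => //; exact: s.
split; last by move=> [X FX]; have [_] := hF X FX.
split.
- by move=> a Ta; exists X0 => //; have [[TX _ _] _] := hF X0 FX0; exact: TX.
- by apply: closed => X FX; have [[_ XD _] _] := hF X FX.
- by apply: closed => X FX; have [[_ _ XM] _] := hF X FX.
Qed.

Lemma exists_maximal_preordering S : proper_preordering S ->
  exists2 P, maximal_preordering P & S `<=` P.
Proof.
move=> pS.
(* [Zorn_bigcup] needs the family to contain [set0], the union of the empty chain. *)
pose G X := X = set0 \/ proper_preordering X /\ S `<=` X.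
have GP Y y : G Y -> Y y -> proper_preordering Y /\ S `<=` Y.
  by case=> // ->.
have chainG F : F `<=` G -> total_on F subset -> G (\bigcup_(X in F) X).
  move=> FG tot.
  have [[X [FX [x Xx]]]|nF] := pselect (exists X, F X /\ X !=set0); last first.
    left; apply/seteqP; split => // y [X FX Xy].
    by apply: nF; exists X; split => //; exists y.
  pose F' := [set Y | F Y /\ Y !=set0].
  have -> : \bigcup_(Y in F) Y = \bigcup_(Y in F') Y.
    apply/seteqP; split => y [Y FY Yy]; exists Y => //; last by case: FY.
    by split => //; exists y.
  right; split; last first.
    by move=> s Ss; exists X; [split => //; exists x | exact: (GP X x (FG X FX) Xx).2].
  apply: proper_preordering_bigcup.
  - by exists X; split => //; exists x.
  - by move=> Y [FY [y Yy]]; have [] := GP Y y (FG Y FY) Yy.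
  - by move=> Y Z [FY _] [FZ _]; exact: tot.
have [M [GM maxM]] := Zorn_bigcup chainG.
have S0 : S 0 by case: pS => -[TS _ _] _; apply: TS; exact: T0.
have [M0|[pM SM]] := GM.
  by exfalso; apply: (maxM S); [rewrite M0; split => [//|/(_ 0 S0)//] | right; split].
exists M => //; split => // Q pQ MQ y Qy; apply: contrapT => nMy.
have MltQ : M `<` Q by split => // /(_ y Qy).
have GQ : G Q by right; split => //; exact: subset_trans SM MQ.
exact: maxM MltQ GQ.
Qed.

Lemma maximal_preordering_adjoin P b : maximal_preordering P ->
  ~ P b -> adjoin P b (-1).
Proof.
move=> [[prP PN1] maxP] nPb; apply: contrapT => nN1; apply: nPb.
apply: (maxP (adjoin P b)); first by split => //; exact: preordering_adjoin.
- exact: sub_adjoin.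
- exact: adjoin_self.
Qed.

Lemma maximal_preordering_total P : maximal_preordering P ->
  forall a, P a \/ P (- a).
Proof.
move=> mP a; have [[[TP PD PM] PN1] _] := mP.
have [//|nPa] := pselect (P a); first by left.
have [//|nPNa] := pselect (P (- a)); first by right.
have [p1 [q1 [Pp1 Pq1 e1]]] := maximal_preordering_adjoin mP nPa.
have [p2 [q2 [Pp2 Pq2 e2]]] := maximal_preordering_adjoin mP nPNa.
exfalso; apply: PN1.
have -> : -1 = p1 + p2 + p1 * p2 + (a * a) * (q1 * q2).
  have -> : (a * a) * (q1 * q2) = - ((a * q1) * (- a * q2)) by ring.
  have -> : a * q1 = -1 - p1 by rewrite e1; ring.
  have -> : - a * q2 = -1 - p2 by rewrite e2; ring.
  ring.
apply: (PD); first by apply: (PD); [exact: PD | exact: PM].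
by apply: (PM); [apply: TP | exact: PM].
Qed.

Lemma exists_total_preordering z : ~ T z ->
  exists P, [/\ proper_preordering P, P (- z) & forall a, P a \/ P (- a)].
Proof.
move=> nTz.
have pS : proper_preordering (adjoin T (- z)).
  split; first exact: preordering_adjoin preordering_T.
  move=> [p [t [Tp Tt e]]]; apply: nTz; apply: (T_of_mul_1D Tp Tt).
  by rewrite -[1 + p]opprK opprD e; ring.
have [P mP SP] := exists_maximal_preordering pS.
exists P; split; [exact: mP.1 | | exact: maximal_preordering_total].
by apply: SP; exact: adjoin_self preordering_T.
Qed.

Section OrderingCharacter.
Variables (RR : realType) (P : set A).
Hypotheses (TP : T `<=` P) (PD : forall a b, P a -> P b -> P (a + b))
  (PM : forall a b, P a -> P b -> P (a * b)) (PN1 : ~ P (-1))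
  (Ptot : forall a, P a \/ P (- a)).

Lemma P_int_ge0 (c : int) : P c%:~R -> 0 <= c.
Proof.
move=> Pc; rewrite leNgt; apply/negP => c0; apply: PN1.
have -> : (-1 : A) = c%:~R + (- c - 1)%:~R by rewrite intrB intrN; ring.
by apply: (PD Pc); apply: TP; apply: Tint; lia.
Qed.

Lemma PMn x k : P x -> P (x *+ k).
Proof. by move=> Px; rewrite -mulr_natr; apply: (PM Px); apply: TP; exact: Tnat. Qed.

Lemma P_rat_le a (m m' : int) (n n' : nat) : (0 < n)%N -> (0 < n')%N ->
  P (a *+ n - m%:~R) -> P (m'%:~R - a *+ n') -> (m%:~R / n%:R : RR) <= m'%:~R / n'%:R.
Proof.
move=> n0 n'0 h1 h2.
have : 0 <= m' * n - m * n'.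
  apply: P_int_ge0.
  have <- : (a *+ n - m%:~R) *+ n' + (m'%:~R - a *+ n') *+ n = (m' * n - m * n')%:~R.
    by rewrite intrB !intrM; ring.
  by apply: PD; exact: PMn.
rewrite subr_ge0 -(ler_int RR) !intrM => h.
by rewrite ler_pdivrMr ?ltr0n // mulrAC ler_pdivlMr ?ltr0n.
Qed.

Definition lower_rats a := [set r : RR | exists m n,
  [/\ (0 < n)%N, P (a *+ n - m%:~R) & r = m%:~R / n%:R]].

Definition ochar a := sup (lower_rats a).

Lemma lower_rats_ub a m n : (0 < n)%N -> P (m%:~R - a *+ n) ->
  ubound (lower_rats a) (m%:~R / n%:R).
Proof. by move=> n0 h _ [m' [n' [n'0 h' ->]]]; exact: P_rat_le h' h. Qed.

Lemma lower_rats_neq0 a : lower_rats a !=set0.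
Proof.
have [M hM] := Tlbd a; exists ((- M%:Z)%:~R / 1%:R), (- M%:Z), 1%N; split => //.
by apply: TP; rewrite intrN opprK addrC.
Qed.

Lemma has_sup_lower_rats a : has_sup (lower_rats a).
Proof.
split; first exact: lower_rats_neq0.
have [M hM] := Tbd a; exists (M%:Z%:~R / 1%:R); apply: lower_rats_ub => //.
exact: TP.
Qed.

Lemma ochar_ge_rat a m n : (0 < n)%N -> P (a *+ n - m%:~R) -> m%:~R / n%:R <= ochar a.
Proof. by move=> n0 h; apply: sup_upper_bound; [exact: has_sup_lower_rats | exists m, n]. Qed.

Lemma ochar_le_rat a m n : (0 < n)%N -> P (m%:~R - a *+ n) -> ochar a <= m%:~R / n%:R.
Proof. by move=> n0 h; apply: ge_sup; [exact: lower_rats_neq0 | exact: lower_rats_ub]. Qed.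

Lemma rat_lt_ocharP a m n : (0 < n)%N -> m%:~R / n%:R < ochar a -> P (a *+ n - m%:~R).
Proof.
move=> n0 h; case: (Ptot (a *+ n - m%:~R)) => // h'.
by move: h; rewrite opprB in h'; rewrite ltNge (ochar_le_rat n0 h').
Qed.

Lemma ochar_lt_ratP a m n : (0 < n)%N -> ochar a < m%:~R / n%:R -> P (m%:~R - a *+ n).
Proof.
move=> n0 h; case: (Ptot (m%:~R - a *+ n)) => // h'.
by move: h; rewrite opprB in h'; rewrite ltNge (ochar_ge_rat n0 h').
Qed.

Lemma ocharN a : ochar (- a) = - ochar a.
Proof.
have ratN (m : int) (n : nat) : ((- m)%:~R / n%:R : RR) = - (m%:~R / n%:R).
  by rewrite intrN mulNr.
apply/eqP; rewrite eq_le; apply/andP; split; rewrite leNgt; apply/negP.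
  move=> /exists_rat_between [m [n [n0 /andP[h1 h2]]]].
  have := rat_lt_ocharP n0 h2.
  rewrite (_ : _ - _ = (- m)%:~R - a *+ n); last by rewrite intrN; ring.
  by move/(ochar_le_rat n0); rewrite ratN; lra.
move=> /exists_rat_between [m [n [n0 /andP[h1 h2]]]].
have := ochar_lt_ratP n0 h1.
rewrite (_ : _ - _ = a *+ n - (- m)%:~R); last by rewrite intrN; ring.
by move/(ochar_ge_rat n0); rewrite ratN; lra.
Qed.

Lemma ocharD_ge a b : ochar a + ochar b <= ochar (a + b).
Proof.
rewrite leNgt; apply/negP => h.
have /exists_rat_between [m1 [n1 [n10 /andP[h11 h12]]]] :
  ochar (a + b) - ochar b < ochar a by lra.
have /exists_rat_between [m2 [n2 [n20 /andP[h21 h22]]]] :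
  ochar (a + b) - m1%:~R / n1%:R < ochar b by lra.
have n12 : (0 < n1 * n2)%N by rewrite muln_gt0 n10 n20.
have := @ochar_ge_rat (a + b) (m1 * n2 + m2 * n1) _ n12.
have -> : ((m1 * n2 + m2 * n1)%:~R / (n1 * n2)%:R : RR) = m1%:~R / n1%:R + m2%:~R / n2%:R.
  have n1z : (n1%:R : RR) != 0 by rewrite pnatr_eq0 -lt0n.
  have n2z : (n2%:R : RR) != 0 by rewrite pnatr_eq0 -lt0n.
  by rewrite intrD !intrM natrM; field; rewrite n1z n2z.
have -> : (a + b) *+ (n1 * n2) - (m1 * n2 + m2 * n1)%:~R =
    (a *+ n1 - m1%:~R) *+ n2 + (b *+ n2 - m2%:~R) *+ n1.
  by rewrite intrD !intrM; ring.
move=> /(_ (PD (PMn _ (rat_lt_ocharP n10 h12)) (PMn _ (rat_lt_ocharP n20 h22)))).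
lra.
Qed.

Lemma ocharD a b : ochar (a + b) = ochar a + ochar b.
Proof.
apply/eqP; rewrite eq_le ocharD_ge andbT.
by have := ocharD_ge (a + b) (- b); rewrite ocharN addrK; lra.
Qed.

Lemma ochar_is_zmod_morphism : zmod_morphism ochar.
Proof. by move=> a b; rewrite ocharD ocharN. Qed.

HB.instance Definition _ := GRing.isZmodMorphism.Build A RR ochar ochar_is_zmod_morphism.

Lemma ochar1 : ochar 1 = 1.
Proof.
have P0 : P 0 by apply: TP; exact: T0.
apply/eqP; rewrite eq_le; apply/andP; split.
  by have := @ochar_le_rat 1 1 1 isT; rewrite divr1; apply; rewrite subrr.
by have := @ochar_ge_rat 1 1 1 isT; rewrite divr1; apply; rewrite subrr.
Qed.

Lemma ochar_ge0 a : P a -> 0 <= ochar a.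
Proof. by move=> Pa; have := @ochar_ge_rat a 0 1 isT; rewrite mul0r subr0; apply. Qed.

Lemma ocharM_ge a b : P a -> P b -> ochar a * ochar b <= ochar (a * b).
Proof.
move=> Pa Pb.
have pa0 := ochar_ge0 Pa; have pb0 := ochar_ge0 Pb; have pab0 := ochar_ge0 (PM Pa Pb).
rewrite leNgt; apply/negP => h.
have pb : 0 < ochar b.
  by rewrite lt_neqAle pb0 andbT; apply: contraTneq h => <-; rewrite mulr0 -leNgt.
have /exists_rat_between [m1 [n1 [n10 /andP[h11 h12]]]] : ochar (a * b) / ochar b < ochar a.
  by rewrite ltr_pdivrMr.
have r1p : 0 < (m1%:~R / n1%:R : RR) by apply: le_lt_trans h11; exact: divr_ge0.
have /exists_rat_between [m2 [n2 [n20 /andP[h21 h22]]]] :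
    ochar (a * b) / (m1%:~R / n1%:R) < ochar b.
  by rewrite ltr_pdivrMr //; rewrite ltr_pdivrMr // in h11; lra.
have r2p : 0 < (m2%:~R / n2%:R : RR) by apply: le_lt_trans h21; exact: divr_ge0 pab0 (ltW r1p).
have m_ge0 (m : int) (n : nat) : (0 < n)%N -> 0 < (m%:~R / n%:R : RR) -> 0 <= m.
  by move=> n0; rewrite pmulr_lgt0 ?invr_gt0 ?ltr0n // ltr0z => /ltW.
have n12 : (0 < n1 * n2)%N by rewrite muln_gt0 n10 n20.
have := @ochar_ge_rat (a * b) (m1 * m2) _ n12.
have -> : ((m1 * m2)%:~R / (n1 * n2)%:R : RR) = m1%:~R / n1%:R * (m2%:~R / n2%:R).
  by rewrite intrM natrM invfM; ring.
have -> : (a * b) *+ (n1 * n2) - (m1 * m2)%:~R =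
    (a *+ n1 - m1%:~R) * (b *+ n2 - m2%:~R)
    + (m1%:~R * (b *+ n2 - m2%:~R) + m2%:~R * (a *+ n1 - m1%:~R)).
  by rewrite !intrM; ring.
have P1 := rat_lt_ocharP n10 h12; have P2 := rat_lt_ocharP n20 h22.
have Pm1 : P m1%:~R by apply: TP; apply: Tint; exact: m_ge0 n10 r1p.
have Pm2 : P m2%:~R by apply: TP; apply: Tint; exact: m_ge0 n20 r2p.
move=> /(_ (PD (PM P1 P2) (PD (PM Pm1 P2) (PM Pm2 P1)))).
by move: h21; rewrite ltr_pdivrMr // mulrC; lra.
Qed.

Lemma ochar_nat n : ochar n%:R = n%:R.
Proof. by rewrite raddfMn /= ochar1. Qed.

Lemma ocharM_ge0 a b : P a -> P b -> ochar (a * b) = ochar a * ochar b.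
Proof.
move=> Pa Pb; apply/eqP; rewrite eq_le ocharM_ge // andbT.
have [N hN] := Tbd a.
have := ocharM_ge (TP hN) Pb.
have -> : (N%:R - a) * b = b *+ N - a * b by rewrite mulrBl mulr_natl.
by rewrite !raddfB /= ochar_nat raddfMn -mulr_natl; lra.
Qed.

Lemma ocharM a b : ochar (a * b) = ochar a * ochar b.
Proof.
have [Na ha] := Tlbd a; have [Nb hb] := Tlbd b.
have := ocharM_ge0 (TP ha) (TP hb).
have -> : (Na%:R + a) * (Nb%:R + b) = a * b + a *+ Nb + b *+ Na + (Na * Nb)%:R.
  by rewrite natrM; ring.
rewrite !raddfD /= !ochar_nat !raddfMn natrM.
by rewrite -[ochar a *+ _]mulr_natr -[ochar b *+ _]mulr_natr; lra.
Qed.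

Lemma ochar_is_monoid_morphism : monoid_morphism ochar.
Proof. by split; [exact: ochar1 | exact: ocharM]. Qed.

End OrderingCharacter.

Theorem archimedean_preprime_character (RR : realType) x : ~ T (- x) ->
  exists psi : {rmorphism A -> RR}, (forall a, T a -> 0 <= psi a) /\ 0 < psi x.
Proof.
move=> not_pos_Nx.
have [k [k0 nTk]] : exists k, (0 < k)%N /\ ~ T ((- x) *+ k + 1).
  apply: contrapT => hk; apply: not_pos_Nx; apply: (Tarch (h := 1)) => k k0.
  by apply: contrapT => nT; apply: hk; exists k.
have [P [[[TP PD PM] PN1] Pz Ptot]] := exists_total_preordering nTk.
(* Eta-expanded, so that HB does not reuse the instance declared on [ochar] in
   the section, which is abstracted over the section hypotheses. *)
pose psi := HB.pack_for {rmorphism A -> RR} (fun a => ochar RR P a)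
  (GRing.isZmodMorphism.Build A RR _ (ochar_is_zmod_morphism RR TP PD PM PN1 Ptot))
  (GRing.isMonoidMorphism.Build A RR _ (ochar_is_monoid_morphism RR TP PD PM PN1 Ptot)).
have psiE : psi =1 ochar RR P by [].
have psi_ge0 a : P a -> 0 <= psi a by rewrite psiE; exact: ochar_ge0.
exists psi; split => [a Ta|]; first exact/psi_ge0/TP.
have := psi_ge0 _ Pz; rewrite rmorphN rmorphD rmorphMn rmorphN rmorph1 -mulr_natr.
have : (0 : RR) < k%:R by rewrite ltr0n.
nra.
Qed.
End Preprime.

Section BoundedFractions.
Variables (R : comPzRingType) (le : R -> R -> Prop).
Hypothesis Hpo : po_comring le.

Lemma po_subr_ge0 x y : le x y <-> le 0 (y - x).
Proof.
split => h; first by have := po_add Hpo (- x) h; rewrite subrr.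
by have := po_add Hpo x h; rewrite add0r subrK.
Qed.

Lemma posD a b : le 0 a -> le 0 b -> le 0 (a + b).
Proof. by move=> ha hb; apply: (po_trans Hpo hb); have := po_add Hpo b ha; rewrite add0r. Qed.

Lemma pos1 : le 0 1. Proof. by have := po_sq Hpo 1; rewrite mulr1. Qed.

Lemma pos_nat n : le 0 n%:R.
Proof. by elim: n => [|n IH]; [exact: po_refl | rewrite mulrS; exact: posD pos1 IH]. Qed.

Lemma pos_anti a : le 0 a -> le 0 (- a) -> a = 0.
Proof. by move=> h1 h2; apply: (po_antisym Hpo _ h1); apply/po_subr_ge0; rewrite sub0r. Qed.

Lemma Loc_ge0 s : Loc le s -> le 0 s.
Proof. by move=> [h _]; have := posD h pos1; rewrite subrK. Qed.

Lemma Loc1 : Loc le 1.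
Proof. by split; [rewrite subrr; exact: po_refl | move=> r; rewrite mulr1]. Qed.

Lemma LocM s t : Loc le s -> Loc le t -> Loc le (s * t).
Proof.
move=> [s1 sK] [t1 tK]; split; last by move=> r; rewrite mulrA => /tK /sK.
have -> : s * t - 1 = (s - 1) * (t - 1) + ((s - 1) + (t - 1)) by ring.
by apply: posD; [exact: po_mul | exact: posD].
Qed.

Lemma Loc_lreg s r : Loc le s -> r * s = 0 -> r = 0.
Proof.
move=> [_ sK] rs0; apply: pos_anti; apply: sK; last rewrite mulNr;
  by rewrite rs0 ?oppr0; exact: po_refl.
Qed.

Lemma is_bdP a : is_bd le a <->
  Loc le a.2 /\ exists n : nat, le 0 (n%:R * a.2 + a.1) /\ le 0 (n%:R * a.2 - a.1).
Proof.
have e1 n : a.1 * 1 - - n%:R * a.2 = n%:R * a.2 + a.1 by ring.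
have e2 n : n%:R * a.2 - a.1 * 1 = n%:R * a.2 - a.1 by ring.
rewrite /is_bd /frac_le /=; split=> -[La [n [h1 h2]]]; split => //; exists n.
  by move/po_subr_ge0: h1; move/po_subr_ge0: h2; rewrite e1 e2.
by split; apply/po_subr_ge0; rewrite ?e1 ?e2.
Qed.

Lemma is_bd_add a b : is_bd le a -> is_bd le b -> is_bd le (frac_add a b).
Proof.
move=> /is_bdP [La [n [h1 h2]]] /is_bdP [Lb [m [h3 h4]]]; apply/is_bdP; split.
  exact: LocM.
have pa := Loc_ge0 La; have pb := Loc_ge0 Lb.
exists (n + m)%N; rewrite natrD /=; split.
  have -> : (n%:R + m%:R) * (a.2 * b.2) + (a.1 * b.2 + b.1 * a.2) =
    (n%:R * a.2 + a.1) * b.2 + (m%:R * b.2 + b.1) * a.2 by ring.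
  by apply: posD; exact: po_mul.
have -> : (n%:R + m%:R) * (a.2 * b.2) - (a.1 * b.2 + b.1 * a.2) =
  (n%:R * a.2 - a.1) * b.2 + (m%:R * b.2 - b.1) * a.2 by ring.
by apply: posD; exact: po_mul.
Qed.

Lemma is_bd_mul a b : is_bd le a -> is_bd le b -> is_bd le (frac_mul a b).
Proof.
move=> /is_bdP [La [n [h1 h2]]] /is_bdP [Lb [m [h3 h4]]]; apply/is_bdP; split.
  exact: LocM.
have pna : le 0 (n%:R * a.2) by apply: po_mul => //; [exact: pos_nat | exact: Loc_ge0].
have pmb : le 0 (m%:R * b.2) by apply: po_mul => //; [exact: pos_nat | exact: Loc_ge0].
exists (3 * (n * m))%N; rewrite !natrM /=; split.
  have -> : 3%:R * (n%:R * m%:R) * (a.2 * b.2) + a.1 * b.1 =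
    (n%:R * a.2 + a.1) * (m%:R * b.2 + b.1) + (n%:R * a.2 - a.1) * (m%:R * b.2)
     + (n%:R * a.2) * (m%:R * b.2 - b.1) by ring.
  by apply: posD; [apply: posD|]; exact: po_mul.
have -> : 3%:R * (n%:R * m%:R) * (a.2 * b.2) - a.1 * b.1 =
  (n%:R * a.2 + a.1) * (m%:R * b.2 - b.1) + (n%:R * a.2 - a.1) * (m%:R * b.2)
   + (n%:R * a.2) * (m%:R * b.2 + b.1) by ring.
by apply: posD; [apply: posD|]; exact: po_mul.
Qed.

Lemma is_bd_opp a : is_bd le a -> is_bd le (- a.1, a.2).
Proof. by move=> /is_bdP [La [n [h1 h2]]]; apply/is_bdP; split => //; exists n; rewrite opprK. Qed.

Lemma is_bd_nat n : is_bd le (n%:R, 1).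
Proof.
apply/is_bdP; split; first exact: Loc1.
by exists n; rewrite mulr1 subrr -natrD; split; [exact: pos_nat | exact: po_refl].
Qed.

Lemma is_bd_inv s : Loc le s -> is_bd le (1, s).
Proof.
move=> Ls; apply/is_bdP; split => //; exists 1%N; rewrite mul1r.
by split; [apply: posD; [exact: Loc_ge0 | exact: pos1] | case: Ls].
Qed.

Local Notation BF := (bdfrac le).

Lemma Loc_den (a : BF) : Loc le (sval a).2. Proof. by case: (svalP a). Qed.

Definition bdadd (a b : BF) : BF := exist _ _ (is_bd_add (svalP a) (svalP b)).
Definition bdmul (a b : BF) : BF := exist _ _ (is_bd_mul (svalP a) (svalP b)).
Definition bdopp (a : BF) : BF := exist _ _ (is_bd_opp (svalP a)).
Definition bdnat n : BF := exist _ _ (is_bd_nat n).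

HB.instance Definition _ := gen_eqMixin BF.
HB.instance Definition _ := gen_choiceMixin BF.

Definition fe (a b : BF) : bool := `[< frac_eq (sval a) (sval b) >].

Lemma feP a b : reflect (frac_eq (sval a) (sval b)) (fe a b).
Proof. exact: asboolP. Qed.

Lemma fe_refl : reflexive fe.
Proof. by move=> a; apply/feP. Qed.

Lemma fe_sym : symmetric fe.
Proof. by move=> a b; apply/feP/feP; rewrite /frac_eq => ->. Qed.

Lemma fe_trans : transitive fe.
Proof.
move=> b a c /feP; rewrite /frac_eq => h1 /feP; rewrite /frac_eq => h2.
apply/feP/eqP; rewrite -subr_eq0; apply/eqP; apply: (Loc_lreg (Loc_den b)).
have -> : ((sval a).1 * (sval c).2 - (sval c).1 * (sval a).2) * (sval b).2 =
  ((sval a).1 * (sval b).2) * (sval c).2 - ((sval c).1 * (sval b).2) * (sval a).2 by ring.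
by rewrite h1 -h2; ring.
Qed.

Canonical fe_equiv := EquivRel fe fe_refl fe_sym fe_trans.

Definition bdloc := {eq_quot fe}.
HB.instance Definition _ : EqQuotient _ fe bdloc := EqQuotient.on bdloc.
HB.instance Definition _ := Choice.on bdloc.

Lemma eq_piP a b : \pi_bdloc a = \pi_bdloc b <-> frac_eq (sval a) (sval b).
Proof. by split => [/eqmodP/feP|/feP/eqmodP]. Qed.

Lemma frac_eq_repr a : frac_eq (sval a) (sval (repr (\pi_bdloc a))).
Proof. by apply/eq_piP; rewrite reprK. Qed.

Lemma bdadd_frac_eq a a' b b' : frac_eq (sval a) (sval a') -> frac_eq (sval b) (sval b') ->
  frac_eq (sval (bdadd a b)) (sval (bdadd a' b')).
Proof.
rewrite /frac_eq /= => h1 h2; apply/eqP; rewrite -subr_eq0; apply/eqP.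
have -> : ((sval a).1 * (sval b).2 + (sval b).1 * (sval a).2) * ((sval a').2 * (sval b').2) -
    ((sval a').1 * (sval b').2 + (sval b').1 * (sval a').2) * ((sval a).2 * (sval b).2) =
  ((sval a).1 * (sval a').2 - (sval a').1 * (sval a).2) * ((sval b).2 * (sval b').2)
  + ((sval b).1 * (sval b').2 - (sval b').1 * (sval b).2) * ((sval a).2 * (sval a').2) by ring.
by rewrite h1 h2 !subrr !mul0r addr0.
Qed.

Lemma bdmul_frac_eq a a' b b' : frac_eq (sval a) (sval a') -> frac_eq (sval b) (sval b') ->
  frac_eq (sval (bdmul a b)) (sval (bdmul a' b')).
Proof.
rewrite /frac_eq /= => h1 h2; apply/eqP; rewrite -subr_eq0; apply/eqP.
have -> : (sval a).1 * (sval b).1 * ((sval a').2 * (sval b').2) -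
    (sval a').1 * (sval b').1 * ((sval a).2 * (sval b).2) =
  ((sval a).1 * (sval a').2 - (sval a').1 * (sval a).2) * ((sval b).1 * (sval b').2)
  + ((sval b).1 * (sval b').2 - (sval b').1 * (sval b).2) * ((sval a').1 * (sval a).2) by ring.
by rewrite h1 h2 !subrr !mul0r addr0.
Qed.

Lemma bdopp_frac_eq a a' : frac_eq (sval a) (sval a') -> frac_eq (sval (bdopp a)) (sval (bdopp a')).
Proof. by rewrite /frac_eq /= !mulNr => ->. Qed.

Definition bdloc_add := lift_op2 bdloc bdadd.
Lemma pi_add : {morph \pi : x y / bdadd x y >-> bdloc_add x y}.
Proof. by move=> x y; unlock bdloc_add; apply/eq_piP; apply: bdadd_frac_eq; exact: frac_eq_repr. Qed.
Canonical pi_add_morph := PiMorph2 pi_add.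

Definition bdloc_mul := lift_op2 bdloc bdmul.
Lemma pi_mul : {morph \pi : x y / bdmul x y >-> bdloc_mul x y}.
Proof. by move=> x y; unlock bdloc_mul; apply/eq_piP; apply: bdmul_frac_eq; exact: frac_eq_repr. Qed.
Canonical pi_mul_morph := PiMorph2 pi_mul.

Definition bdloc_opp := lift_op1 bdloc bdopp.
Lemma pi_opp : {morph \pi : x / bdopp x >-> bdloc_opp x}.
Proof. by move=> x; unlock bdloc_opp; apply/eq_piP; apply: bdopp_frac_eq; exact: frac_eq_repr. Qed.
Canonical pi_opp_morph := PiMorph1 pi_opp.

Definition bdloc_zero := \pi_bdloc (bdnat 0).
Definition bdloc_one := \pi_bdloc (bdnat 1).

Ltac frac_quot_ring := rewrite /bdloc_zero /bdloc_one !piE; apply/eq_piP; rewrite /frac_eq /=; ring.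

Lemma bdloc_addA : associative bdloc_add.
Proof. by elim/quotW=> x; elim/quotW=> y; elim/quotW=> z; frac_quot_ring. Qed.
Lemma bdloc_addC : commutative bdloc_add.
Proof. by elim/quotW=> x; elim/quotW=> y; frac_quot_ring. Qed.
Lemma bdloc_add0 : left_id bdloc_zero bdloc_add.
Proof. by elim/quotW=> x; frac_quot_ring. Qed.
Lemma bdloc_addN : left_inverse bdloc_zero bdloc_opp bdloc_add.
Proof. by elim/quotW=> x; frac_quot_ring. Qed.

HB.instance Definition _ :=
  GRing.isZmodule.Build bdloc bdloc_addA bdloc_addC bdloc_add0 bdloc_addN.

Lemma bdloc_mulA : associative bdloc_mul.
Proof. by elim/quotW=> x; elim/quotW=> y; elim/quotW=> z; frac_quot_ring. Qed.
Lemma bdloc_mulC : commutative bdloc_mul.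
Proof. by elim/quotW=> x; elim/quotW=> y; frac_quot_ring. Qed.
Lemma bdloc_mul1 : left_id bdloc_one bdloc_mul.
Proof. by elim/quotW=> x; frac_quot_ring. Qed.
Lemma bdloc_mulDl : left_distributive bdloc_mul bdloc_add.
Proof. by elim/quotW=> x; elim/quotW=> y; elim/quotW=> z; frac_quot_ring. Qed.

HB.instance Definition _ :=
  GRing.Zmodule_isComPzRing.Build bdloc bdloc_mulA bdloc_mulC bdloc_mul1 bdloc_mulDl.

Lemma piD a b : \pi_bdloc a + \pi_bdloc b = \pi_bdloc (bdadd a b).
Proof. exact: (esym (pi_add a b)). Qed.
Lemma piM a b : \pi_bdloc a * \pi_bdloc b = \pi_bdloc (bdmul a b).
Proof. exact: (esym (pi_mul a b)). Qed.
Lemma piN a : - \pi_bdloc a = \pi_bdloc (bdopp a).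
Proof. exact: (esym (pi_opp a)). Qed.
Lemma pi1 : 1 = \pi_bdloc (bdnat 1). Proof. by []. Qed.
Lemma pi_nat n : n%:R = \pi_bdloc (bdnat n).
Proof.
elim: n => [//|n IH].
by rewrite mulrS IH pi1 piD; apply/eq_piP; rewrite /frac_eq /= mulrS; ring.
Qed.

Definition bdpos (x : bdloc) : Prop := le 0 (sval (repr x)).1.

Lemma bdpos_pi a : bdpos (\pi_bdloc a) <-> le 0 (sval a).1.
Proof.
have := frac_eq_repr a; rewrite /bdpos /frac_eq; set r := sval (repr _) => e.
have Lr : Loc le r.2 by exact: Loc_den.
split => hp; first by apply: Lr.2; rewrite e; apply: po_mul => //; exact/Loc_ge0/Loc_den.
by apply: (Loc_den a).2; rewrite -e; apply: po_mul => //; exact: Loc_ge0.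
Qed.

Lemma bdposD x y : bdpos x -> bdpos y -> bdpos (x + y).
Proof.
elim/quotW: x => a; elim/quotW: y => b; rewrite piD !bdpos_pi /= => ha hb.
by apply: posD; apply: po_mul => //; exact/Loc_ge0/Loc_den.
Qed.

Lemma bdposM x y : bdpos x -> bdpos y -> bdpos (x * y).
Proof. by elim/quotW: x => a; elim/quotW: y => b; rewrite piM !bdpos_pi; exact: po_mul. Qed.

Lemma bdpos_sq x : bdpos (x * x).
Proof. by elim/quotW: x => a; rewrite piM bdpos_pi; exact: po_sq. Qed.

Lemma bdpos_bd x : exists n : nat, bdpos (n%:R - x).
Proof.
elim/quotW: x => a; have /is_bdP [_ [n [_ h]]] := svalP a.
exists n; rewrite pi_nat piN piD bdpos_pi /=.
by rewrite (_ : _ + _ = n%:R * (sval a).2 - (sval a).1) //; ring.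
Qed.

Lemma bdpos_arch : archimedean le ->
  forall g h, (forall k, (0 < k)%N -> bdpos (g *+ k + h)) -> bdpos g.
Proof.
move=> Harch; elim/quotW=> a; elim/quotW=> b hk; rewrite bdpos_pi.
apply: (Loc_den b).2; apply: (Harch _ ((sval b).1 * (sval a).2)) => k k0.
have := hk k k0; rewrite -mulr_natr pi_nat piM piD bdpos_pi /=.
by rewrite (_ : _ + _ = (sval a).1 * (sval b).2 *+ k + (sval b).1 * (sval a).2) //; ring.
Qed.

Lemma bdpos_mulVl s (Ls : Loc le s) y :
  bdpos (\pi_bdloc (exist _ _ (is_bd_inv Ls)) * y) -> bdpos y.
Proof. by elim/quotW: y => c; rewrite piM !bdpos_pi /= mul1r. Qed.

Lemma character_pi (RR : realType) (psi : {rmorphism bdloc -> RR}) :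
  (forall x, bdpos x -> 0 <= psi x) -> character (fun c => psi (\pi_bdloc c)).
Proof.
move=> psi_ge0; split.
- by move=> c d /eq_piP ->.
- by move=> c d c' /(eq_piP c' (bdadd c d)) ->; rewrite -piD rmorphD.
- by move=> c d c' /(eq_piP c' (bdmul c d)) ->; rewrite -piM rmorphM.
- by move=> c /(eq_piP c (bdnat 1)) ->; rewrite -pi1 rmorph1.
- by move=> c hc; apply/psi_ge0/bdpos_pi; move: hc; rewrite /frac_le /= mul0r mulr1.
Qed.

Section Character.
Variables (RR : realType) (phi : bdfrac le -> RR).
Hypothesis Hphi : character phi.

Definition phi_bar (x : bdloc) := phi (repr x).

Lemma phi_bar_pi a : phi_bar (\pi_bdloc a) = phi a.
Proof. by case: Hphi => phiE _ _ _ _; apply: phiE; rewrite /frac_eq (frac_eq_repr a); ring. Qed.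

Lemma phi_barD x y : phi_bar (x + y) = phi_bar x + phi_bar y.
Proof.
elim/quotW: x => a; elim/quotW: y => b; rewrite piD !phi_bar_pi.
by case: Hphi => _ phiD _ _ _; apply: phiD; rewrite /frac_eq; ring.
Qed.

Lemma phi_bar_is_zmod_morphism : zmod_morphism phi_bar.
Proof. by move=> x y; have := phi_barD (x - y) y; rewrite subrK => ->; rewrite addrK. Qed.

HB.instance Definition _ :=
  GRing.isZmodMorphism.Build bdloc RR phi_bar phi_bar_is_zmod_morphism.

Lemma phi_bar_is_monoid_morphism : monoid_morphism phi_bar.
Proof.
case: Hphi => _ _ phiM phi1 _; split.
  by rewrite pi1 phi_bar_pi; apply: phi1; rewrite /frac_eq /=; ring.
elim/quotW=> a; elim/quotW=> b; rewrite piM !phi_bar_pi.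
by apply: phiM; rewrite /frac_eq; ring.
Qed.

HB.instance Definition _ :=
  GRing.isMonoidMorphism.Build bdloc RR phi_bar phi_bar_is_monoid_morphism.

Lemma phi_bar_ge0 x : bdpos x -> 0 <= phi_bar x.
Proof.
elim/quotW: x => a; rewrite bdpos_pi phi_bar_pi => h.
by case: Hphi => _ _ _ _; apply; rewrite /frac_le /= mul0r mulr1.
Qed.

Lemma character_approx (Harch : archimedean le) q (Lq : Loc le q)
    n (a : 'I_n -> bdfrac le) (N : nat) : (0 < N)%N ->
  exists psi : {rmorphism bdloc -> RR}, [/\ forall x, bdpos x -> 0 <= psi x,
    0 < psi (\pi_bdloc (exist _ _ (is_bd_inv Lq))) &
    forall i, `|phi (a i) - psi (\pi_bdloc (a i))| * N%:R < n.+2%:R].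
Proof.
move=> N0.
pose m i := Num.floor (N%:R * phi (a i)).
pose g : bdloc := \sum_(i < n) (\pi_bdloc (a i) *+ N - (m i)%:~R) ^+ 2.
pose b : bdloc := \pi_bdloc (exist _ _ (is_bd_inv Lq)).
have frac_m i : 0 <= N%:R * phi (a i) - (m i)%:~R < 1.
  have := floor_le (N%:R * phi (a i)); have := floorD1_gt (N%:R * phi (a i)).
  by rewrite intrD /m; lra.
have phi_g : phi_bar g <= n%:R.
  rewrite rmorph_sum -[n in _ <= n%:R]card_ord -sumr_const; apply: ler_sum => i _.
  rewrite rmorphXn rmorphB rmorphMn rmorph_int /= phi_bar_pi -mulr_natl.
  by have := frac_m i; set s := _ - _; nra.
have not_pos_Nx : ~ bdpos (- (b * (n.+1%:R - g))).
  rewrite -mulrN opprB => /bdpos_mulVl /phi_bar_ge0.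
  by rewrite rmorphB rmorph_nat -natr1; lra.
have [psi [psi_ge0 psix]] :=
  archimedean_preprime_character bdposD bdposM bdpos_sq bdpos_bd (bdpos_arch Harch) RR not_pos_Nx.
have psi_b : 0 <= psi b by apply: psi_ge0; rewrite bdpos_pi; exact: pos1.
rewrite rmorphM rmorphB rmorph_nat in psix.
have pb : 0 < psi b.
  by rewrite lt_neqAle psi_b andbT; apply: contraTneq psix => <-; rewrite mul0r ltxx.
have pg : psi g < n.+1%:R by rewrite pmulr_rgt0 // subr_gt0 in psix.
exists psi; split => // i.
have hg : (N%:R * psi (\pi_bdloc (a i)) - (m i)%:~R) ^+ 2 <= psi g.
  rewrite /g rmorph_sum (bigD1 i) //= rmorphXn rmorphB rmorphMn rmorph_int mulr_natl lerDl.
  by apply: sumr_ge0 => j _; rewrite rmorphXn sqr_ge0.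
have := dist_lt_of_sqr_lt (frac_m i) (le_lt_trans hg pg).
rewrite (_ : _ - _ = (phi (a i) - psi (\pi_bdloc (a i))) * N%:R); last by ring.
by rewrite normrM (ger0_norm (ler0n _ N)).
Qed.

End Character.

Lemma O_q_lt_infty_meets_nbhd (Harch : archimedean le) q (Lq : Loc le q) (RR : realType)
    (phi : bdfrac le -> RR) (Hphi : character phi)
    n (a : 'I_n -> bdfrac le) (V : 'I_n -> set RR) :
  (forall i, open (V i)) -> (forall i, V i (phi (a i))) ->
  exists psi, @O_q_lt_infty R le RR q psi /\ forall i, V i (psi (a i)).
Proof.
move=> oV Va.
have [e he] := choice (fun i => open_ball_around (oV i) (Va i)).
have [N [N0 hN]] := exists_nat_scale (c := n.+2%:R) (fun i => (he i).1) (ler0n _ _).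
have [psi [psi_ge0 psi_b psi_close]] := character_approx Hphi Harch Lq a N0.
exists (fun c => psi (\pi_bdloc c)); split.
  split; first exact: character_pi.
  by exists (exist _ _ (is_bd_inv Lq)); split.
move=> i; apply: (he i).2.
by rewrite -(@ltr_pM2r _ N%:R) ?ltr0n //; apply: lt_trans (hN i).
Qed.

End BoundedFractions.

Theorem proposition29 (RR : realType) (R : comPzRingType) (le : R -> R -> Prop)
  (Hpo : po_comring le) (Harch : archimedean le) (Hloc : localizable le)
  (q : R) (Hq : Loc le q) :
  @dense_in_K R le RR (@O_q_lt_infty R le RR q).
Proof.
move=> phi Kphi n a V oV Va.
exact: (O_q_lt_infty_meets_nbhd Hpo Harch Hq Kphi oV Va).
Qed.
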